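(* Let $G=(V,E)$ be a finite directed acyclic graph with $V=\{v_1,\dots,v_n\}$, $G'=(V,E')$ its minimum equivalent graph, $B$ the associated bipartite graph, and $M$ a maximum matching of $B$ (a matching of largest cardinality). Then $\Phi(M)$ satisfies maximum logical concurrency on $G$, and among all stream assignments $f:V\to S$ satisfying maximum logical concurrency on $G$, $\Phi(M)$ attains the minimum value of $\mathrm{min}_{sync}(G,f)$.
   Context: A path from $u$ to $v$ in a directed graph is a nonempty sequence of edges $(u,w_1),\dots,(w_k,v)$ of that graph. The minimum equivalent graph (MEG) of a finite DAG $G=(V,E)$ is the subgraph $G'=(V,E')$, $E'\subseteq E$, with the same vertex set and the smallest number of edges among subgraphs having the same reachability relation as $G$. The bipartite graph $B=(V_1,V_2,E_B)$ has $V_1=\{x_1,\dots,x_n\}$, $V_2=\{y_1,\dots,y_n\}$ and $E_B=\{(x_i,y_j) : (v_i,v_j)\in E'\}$; a matching is a set of edges of $E_B$ no two sharing an endpoint. Let $S=\{s_1,\dots,s_n\}$ be a set of streams; a stream assignment is a function $f:V\to S$. It satisfies maximum logical concurrency on $G$ if for all distinct $u,v\in V$ with no path between them in either direction in $G$, $f(u)\neq f(v)$. For a matching $m$, $\Phi(m)$ is the stream assignment obtained by starting from the partition $\{\{v_1\},\dots,\{v_n\}\}$, merging, for each $(x_i,y_j)\in m$, the blocks containing $v_i$ and $v_j$, and assigning two vertices the same stream iff they lie in the same block. A synchronization plan $\Lambda\subseteq E$ is safe for $f$ on $G$ if for every edge $(u,v)\in E$, either $f(u)=f(v)$ or there is a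 path $P\subseteq E$ from $u$ to $v$ with $P\cap\Lambda\neq\emptyset$; $\mathrm{min}_{sync}(G,f)=\min\{|\Lambda| : \Lambda\subseteq E \text{ safe for } f \text{ on } G\}$. *)

From mathcomp Require Import all_boot all_order.
Set Implicit Arguments. Unset Strict Implicit. Unset Printing Implicit Defensive.

Section Defs.
Variable n : nat.
Notation V := 'I_n.
Notation edges := {set V * V}.

Definition erel (E : edges) : rel V := fun u v => (u, v) \in E.

Definition reach (E : edges) (u v : V) : bool :=
  [exists w, erel E u w && connect (erel E) w v].

Definition dag (E : edges) : Prop := forall v, ~~ reach E v v.

Definition is_MEG (E E' : edges) : Prop :=
  [/\ E' \subset E,
      (forall u v, reach E' u v = reach E u v) &
      (forall E'' : edges, E'' \subset E ->
         (forall u v, reach E'' u v = reach E u v) -> #|E'| <= #|E''|)].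

(* Bipartite graph B = (V1, V2, E_B): the pair (i, j) stands for the edge
   (x_i, y_j), which is in E_B iff (v_i, v_j) \in E'.  Thus E_B is represented
   by E' itself, and two edges of B share an endpoint iff they have the same
   first component (same x_i) or the same second component (same y_j). *)
Definition bip_edges (E' : edges) : edges := E'.

Definition is_matching (E' m : edges) : Prop :=
  m \subset bip_edges E' /\
  (forall e1 e2, e1 \in m -> e2 \in m -> e1 != e2 ->
     (e1.1 != e2.1) && (e1.2 != e2.2)).

Definition is_max_matching (E' M : edges) : Prop :=
  is_matching E' M /\ (forall m, is_matching E' m -> #|m| <= #|M|).

(* Streams S = {s_1..s_n} are represented by 'I_n. *)
Definition stream_assignment := V -> V.

(* Phi(m): the blocks obtained by merging v_i and v_j for each (x_i,y_j) in m
   are the equivalence classes of the reflexive-symmetric-transitive closure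
   of the relation {(v_i,v_j) | (x_i,y_j) \in m}; each vertex is assigned the
   stream indexed by the canonical representative (root) of its block. *)
Definition mrel (m : edges) : rel V :=
  fun u v => ((u, v) \in m) || ((v, u) \in m).

Definition Phi (m : edges) : stream_assignment := fun v => root (mrel m) v.

Definition MLC (E : edges) (f : stream_assignment) : Prop :=
  forall u v : V, u != v -> ~~ reach E u v -> ~~ reach E v u -> f u != f v.

(* A path from u to v in E contains an edge (a,b) of Lambda iff
   u reaches a (possibly u = a), (a,b) \in E, and b reaches v (possibly b = v). *)
Definition safe (E : edges) (f : stream_assignment) (L : edges) : bool :=
  (L \subset E) &&
  [forall e in E,
     (f e.1 == f e.2) ||
     [exists x in L, [&& x \in E, connect (erel E) e.1 x.1
                         & connect (erel E) x.2 e.2]]].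

(* min_sync(G,f) = min { |L| : L safe }.  E itself is always safe and every
   safe L has |L| <= |E|, so #|E| is a harmless initial value for the min. *)
Definition min_sync (E : edges) (f : stream_assignment) : nat :=
  \big[minn/#|E|]_(L : edges | safe E f L) #|L|.

End Defs.

From mathcomp Require Import all_boot all_order.
From mathcomp Require Import zify.
Set Implicit Arguments. Unset Strict Implicit. Unset Printing Implicit Defensive.

(* The key fact is that the MEG E' of a DAG E is irredundant: an edge (u,v)
   of E' is the only E-path from u to v passing through an E-edge.  Hence
   - every safe plan for f contains the edges of E' whose endpoints get
     different streams, and these edges alone form a safe plan, so min_sync E f = #|E'| - #|E' ∩ same f|, where
     same f is the set of pairs with equal streams;
   - if f satisfies maximum logical concurrency, E' ∩ same f is a matching
     of B (two such edges sharing an endpoint would give a path bypassing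
     one of them), so #|E' ∩ same f| <= #|M|;
   - Phi M puts the endpoints of every edge of M in the same block, so
     #|M| <= #|E' ∩ same (Phi M)|; and two vertices in one block of Phi M
     are joined by a simple alternating chain of matching edges, which is
     necessarily a directed path, so Phi M satisfies maximum concurrency. *)

Lemma connect_avoid_edge (T : finType) (e : rel T) (u v x y : T) :
  connect e x y ->
  connect (fun a b => e a b && ((a, b) != (u, v))) x y \/
  (connect e x u /\ connect e v y).
Proof.
case/connectP=> p; elim: p x => [|w p IH] x /=; first by move=> _ ->; left.
case/andP=> exw pw ey; case: (IH w pw ey) => [avoid|[wu vy]].
- have [/eqP[-> ew]|ne] := boolP ((x, w) == (u, v)).
    rewrite -ew; right; split; first exact: connect0.
    by apply: connect_sub avoid => a b /andP[ab _]; apply: connect1.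
  by left; apply: connect_trans avoid; apply: connect1; rewrite exw ne.
- by right; split => //; apply: connect_trans (connect1 exw) wu.
Qed.

Lemma connect_label_change (T : finType) (e : rel T) (L : eqType) (f : T -> L)
    (x y : T) :
  connect e x y -> f x != f y ->
  exists a b, [/\ e a b, f a != f b, connect e x a & connect e b y].
Proof.
case/connectP=> p; elim: p x => [|w p IH] x /=; first by move=> _ -> /eqP.
case/andP=> exw pw ey fxy.
have [/eqP fxw|fxw] := boolP (f x == f w).
  have fwy : f w != f y by rewrite -fxw.
  have [a [b [ab fab wa b_y]]] := IH w pw ey fwy.
  by exists a, b; split => //; apply: connect_trans (connect1 exw) wa.
by exists x, w; split; rewrite ?connect0 //; apply/connectP; exists p.
Qed.

Section Reachability.
Variable n : nat.
Notation V := 'I_n.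
Implicit Types E : {set V * V}.

Lemma reach_connect E x y : reach E x y -> connect (erel E) x y.
Proof. by case/existsP=> w /andP[xw wy]; apply: connect_trans (connect1 xw) wy. Qed.

Lemma connect_reach E x y : connect (erel E) x y -> x = y \/ reach E x y.
Proof.
case/connectP=> [[|w p]] /= => [_ -> | /andP[xw wp] ->]; first by left.
by right; apply/existsP; exists w; rewrite xw; apply/connectP; exists p.
Qed.

Lemma reach_connect_trans E x y z :
  reach E x y -> connect (erel E) y z -> reach E x z.
Proof.
case/existsP=> w /andP[xw wy] yz; apply/existsP; exists w.
by rewrite xw (connect_trans wy yz).
Qed.

Lemma edge_reach E x y : (x, y) \in E -> reach E x y.
Proof. by move=> xy; apply/existsP; exists y; rewrite /erel xy connect0. Qed.

Lemma connect_subgraph E1 E2 x y :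
  E1 \subset E2 -> connect (erel E1) x y -> connect (erel E2) x y.
Proof.
by move=> sE; apply: connect_sub => a b ab; apply/connect1/(subsetP sE).
Qed.

Lemma reach_subgraph E1 E2 x y : E1 \subset E2 -> reach E1 x y -> reach E2 x y.
Proof.
move=> sE /existsP[w /andP[xw wy]]; apply/existsP; exists w.
by rewrite /erel (subsetP sE _ xw) (connect_subgraph sE wy).
Qed.

End Reachability.

Section MinimumEquivalentGraph.
Variables (n : nat) (E E' : {set 'I_n * 'I_n}).
Hypotheses (dagE : dag E) (megE : is_MEG E E').

Lemma MEG_sub : E' \subset E.
Proof. by case: megE. Qed.

Lemma MEG_reach u v : reach E' u v = reach E u v.
Proof. by case: megE. Qed.

Lemma MEG_dag : dag E'.
Proof. by move=> v; rewrite MEG_reach; apply: dagE. Qed.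

(* If E' minus an edge (u,v) still joins u to v, it has the same
   reachability as E' (every use of (u,v) can be rerouted). *)
Lemma reach_delete_redundant u v :
  reach (E' :\ (u, v)) u v -> forall a b, reach (E' :\ (u, v)) a b = reach E a b.
Proof.
move=> ruv a b; rewrite -MEG_reach; apply/idP/idP.
  exact/reach_subgraph/subsetDl.
have c_del x y : connect (erel E') x y -> connect (erel (E' :\ (u, v))) x y.
  apply: connect_sub => x' y' xy.
  have [/eqP[-> ->]|ne] := boolP ((x', y') == (u, v)); first exact: reach_connect.
  by apply: connect1; rewrite /erel in_setD1 ne.
case/existsP=> w /andP[aw wb].
have [/eqP[-> ew]|ne] := boolP ((a, w) == (u, v)).
  by rewrite ew in wb; apply: reach_connect_trans ruv (c_del _ _ wb).
by apply/existsP; exists w; rewrite /erel in_setD1 ne -/(erel E' a w) aw c_del.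
Qed.

(* In the acyclic graph E', a detour u ->+ w ->+ v around an edge (u,v)
   survives the deletion of (u,v). *)
Lemma detour_avoids_edge u v w : (u, v) \in E' ->
  reach E' u w -> reach E' w v -> reach (E' :\ (u, v)) u v.
Proof.
move=> uv /existsP[w1 /andP[uw1 w1w]] wv.
have w1v : connect (erel E') w1 v := connect_trans w1w (reach_connect wv).
have w1_neq_v : w1 != v.
  apply/negP => /eqP ew1; rewrite ew1 in w1w.
  by have /negP[] := MEG_dag w; apply: reach_connect_trans wv w1w.
case: (connect_avoid_edge u v w1v) => [avoid|[w1u _]].
  apply/existsP; exists w1.
  rewrite /erel in_setD1 xpair_eqE negb_and w1_neq_v orbT -/(erel E' u w1) uw1 /=.
  by apply: connect_sub avoid => a b ab; apply: connect1; rewrite /erel in_setD1 andbC.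
by have /negP[] := MEG_dag u; apply: reach_connect_trans (edge_reach uw1) w1u.
Qed.

Lemma MEG_no_detour u v w : (u, v) \in E' -> reach E u w -> reach E w v -> False.
Proof.
move=> uv; rewrite -!MEG_reach => uw wv.
have same := reach_delete_redundant (detour_avoids_edge uv uw wv).
case: megE => sE _ minE.
have := minE _ (subset_trans (subsetDl _ _) sE) same.
by rewrite (cardsD1 (u, v) E') uv ltnn.
Qed.

Lemma MEG_edge_unique_path u v a b : (u, v) \in E' ->
  connect (erel E) u a -> (a, b) \in E -> connect (erel E) b v -> a = u /\ b = v.
Proof.
move=> uv ua ab bv; case: (connect_reach ua) => [eua|rua].
  subst a; split => //; case: (connect_reach bv) => // rbv.
  by case: (MEG_no_detour uv (edge_reach ab) rbv).
by case: (MEG_no_detour uv rua (reach_connect_trans (edge_reach ab) bv)).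
Qed.

End MinimumEquivalentGraph.

Section MinSync.
Variables (n : nat) (E E' : {set 'I_n * 'I_n}).
Hypotheses (dagE : dag E) (megE : is_MEG E E').

Definition same_stream (f : stream_assignment n) : {set 'I_n * 'I_n} :=
  [set e | f e.1 == f e.2].

Lemma min_sync_le (f : stream_assignment n) L : safe E f L -> min_sync E f <= #|L|.
Proof.
move=> safeL; rewrite /min_sync.
have : L \in index_enum {set 'I_n * 'I_n} by rewrite mem_index_enum.
elim: (index_enum _) => [//|L' r IH]; rewrite big_cons inE.
case/orP=> [/eqP <-|Lr]; first by rewrite safeL geq_minl.
case: (safe E f L') => //=; last exact: IH.
by apply: leq_trans (IH Lr); rewrite geq_minr.
Qed.

Lemma le_min_sync (f : stream_assignment n) k :
  k <= #|E| -> (forall L, safe E f L -> k <= #|L|) -> k <= min_sync E f.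
Proof.
move=> kE kL; rewrite /min_sync.
by apply: (big_ind (fun x => k <= x)) => // x y kx ky; rewrite leq_min kx ky.
Qed.

(* The MEG edges joining different streams form a safe plan: an edge of E
   with different streams is covered by an E'-path, which must cross. *)
Lemma cross_edges_safe (f : stream_assignment n) : safe E f (E' :\: same_stream f).
Proof.
have sE := MEG_sub megE.
apply/andP; split; first exact: subset_trans (subsetDl _ _) sE.
apply/forall_inP => -[u v] /= uvE; apply/orP.
have [_|fuv] := boolP (f u == f v); [by left | right].
have /reach_connect uv' : reach E' u v by rewrite (MEG_reach megE) edge_reach.
have [a [b [ab fab ua bv]]] := connect_label_change uv' fuv; rewrite /erel in ab.
apply/existsP; exists (a, b); rewrite !inE /= fab ab (subsetP sE _ ab) /=.
by rewrite !(connect_subgraph sE).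
Qed.

(* Every safe plan contains these edges, by irredundancy of the MEG. *)
Lemma safe_contains_cross_edges (f : stream_assignment n) L :
  safe E f L -> E' :\: same_stream f \subset L.
Proof.
case/andP=> _ /forall_inP covered; apply/subsetP => -[u v].
rewrite !inE /= => /andP[fuv uv].
case/orP: (covered _ (subsetP (MEG_sub megE) _ uv)) => /=.
  by rewrite (negbTE fuv).
case/exists_inP=> -[a b] abL /and3P[/= abE ua bv].
by case: (MEG_edge_unique_path dagE megE uv ua abE bv) => ea eb; subst.
Qed.

Lemma min_sync_MEG (f : stream_assignment n) :
  min_sync E f = #|E' :\: same_stream f|.
Proof.
apply/eqP; rewrite eqn_leq min_sync_le ?cross_edges_safe //=.
apply: le_min_sync => [|L /safe_contains_cross_edges]; last exact: subset_leq_card.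
exact/subset_leq_card/(subset_trans (subsetDl _ _) (MEG_sub megE)).
Qed.

(* Under maximum logical concurrency, the same-stream MEG edges form a
   matching of B: two of them sharing an endpoint would have comparable
   other endpoints, giving a detour around one of them. *)
Lemma MLC_same_stream_matching (f : stream_assignment n) :
  MLC E f -> is_matching E' (E' :&: same_stream f).
Proof.
move=> mlc; split; first exact: subsetIl.
have comparable x y : x != y -> f x == f y -> reach E x y || reach E y x.
  move=> xy fxy; apply/negPn/negP; rewrite negb_or => /andP[nxy nyx].
  by move: (mlc x y xy nxy nyx); rewrite fxy.
have er x y : (x, y) \in E' -> reach E x y.
  by move=> xy; apply/edge_reach/(subsetP (MEG_sub megE)).
move=> [u v] [w z]; rewrite !inE /= => /andP[uv /eqP fuv] /andP[wz /eqP fwz] ne.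
apply/andP; split; apply/negP => /eqP /= eq; subst.
- have vz : v != z by apply: contraNneq ne => ->.
  have fvz : f v == f z by rewrite -fuv fwz.
  case/orP: (comparable v z vz fvz) => r.
    exact: (MEG_no_detour dagE megE wz (er _ _ uv) r).
  exact: (MEG_no_detour dagE megE uv (er _ _ wz) r).
- have uw : u != w by apply: contraNneq ne => ->.
  have fuw : f u == f w by rewrite fuv fwz.
  case/orP: (comparable u w uw fuw) => r.
    exact: (MEG_no_detour dagE megE uv r (er _ _ wz)).
  exact: (MEG_no_detour dagE megE wz r (er _ _ uv)).
Qed.

End MinSync.

Section PhiOfMatching.
Variables (n : nat) (M : {set 'I_n * 'I_n}).

Hypothesis disjointM : forall e1 e2, e1 \in M -> e2 \in M -> e1 != e2 ->
  (e1.1 != e2.1) && (e1.2 != e2.2).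

Lemma mrel_sym : symmetric (mrel M).
Proof. by move=> x y; rewrite /mrel orbC. Qed.

Lemma Phi_eq_connect x y : (Phi M x == Phi M y) = connect (mrel M) x y.
Proof. by rewrite /Phi root_connect //; apply/sym_connect_sym/mrel_sym. Qed.

Lemma matching_same_stream : M \subset same_stream (Phi M).
Proof.
by apply/subsetP => -[u v] uv; rewrite inE Phi_eq_connect connect1 // /mrel uv.
Qed.

(* A simple chain of matching edges (taken in either direction) is a
   directed path: consecutive edges cannot share a head or a tail, so they
   all point the same way along the chain. *)
Lemma matching_chain_directed x p :
  path (mrel M) x p -> uniq (x :: p) -> p != [::] ->
  ((x, head x p) \in M /\ reach M x (last x p)) \/
  ((head x p, x) \in M /\ reach M (last x p) x).
Proof.
elim: p x => [|y q IH] x //= /andP[xy pq] /andP[xq uq] _.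
case: q IH pq uq xq => [|z q] IH pq uq xq.
  by case/orP: xy => xy; [left|right]; split => //=; apply: edge_reach.
have x_neq_z : x != z by apply: contraNneq xq => ->; rewrite !inE eqxx orbT.
case: (IH y pq uq isT) => /= -[yz r]; case/orP: xy => xy.
- by left; split => //; apply: reach_connect_trans (edge_reach xy) (reach_connect r).
- have ne : (y, x) != (y, z) by apply: contraNneq x_neq_z => -[->].
  by have := disjointM xy yz ne; rewrite eqxx.
- have ne : (x, y) != (z, y) by apply: contraNneq x_neq_z => -[->].
  by have := disjointM xy yz ne; rewrite eqxx andbF.
- by right; split => //; apply: reach_connect_trans r (reach_connect (edge_reach xy)).
Qed.

Lemma Phi_MLC (E : {set 'I_n * 'I_n}) : M \subset E -> MLC E (Phi M).
Proof.
move=> sME u v uv nuv nvu; apply/negP; rewrite Phi_eq_connect.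
case/connectP=> p pth ev; subst v; move: uv nuv nvu.
case: (shortenP pth) => p' pth' uniq' _ uv nuv nvu.
have p'_nil : p' != [::] by apply: contraNneq uv => ->.
by case: (matching_chain_directed pth' uniq' p'_nil) => -[_ /(reach_subgraph sME) r];
  rewrite r in nuv nvu.
Qed.

End PhiOfMatching.

Theorem theorem4 (n : nat) (E E' M : {set 'I_n * 'I_n}) :
  dag E -> is_MEG E E' -> is_max_matching E' M ->
  MLC E (Phi M) /\
  (forall f : stream_assignment n, MLC E f -> min_sync E (Phi M) <= min_sync E f).
Proof.
move=> dagE megE [[ME' disjointM] maxM].
split; first exact/Phi_MLC/(subset_trans ME')/(MEG_sub megE).
move=> f mlc; rewrite !(min_sync_MEG dagE megE).
have M_le_Phi : #|M| <= #|E' :&: same_stream (Phi M)|.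
  by apply/subset_leq_card; rewrite subsetI ME' matching_same_stream.
have f_le_M : #|E' :&: same_stream f| <= #|M|.
  exact/maxM/(MLC_same_stream_matching dagE megE).
have := cardsID (same_stream (Phi M)) E'; have := cardsID (same_stream f) E'.
lia.
Qed.
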